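(* In the Node-Capacitated Clique model, there is an algorithm (the Aggregate-and-Broadcast Algorithm) that solves every Aggregate-and-Broadcast Problem in $O(\log n)$ rounds: given a distributive aggregate function $f$ and a set $A\subseteq V$ in which each member of $A$ stores exactly one input value, at the end every node of $V$ knows $f(\text{multiset of inputs of } A)$.
   Context: Node-Capacitated Clique model: a set $V$ of $n$ nodes with unique identifiers from $\{0,\dots,n-1\}$; every node knows the identifiers of all nodes. Computation proceeds in synchronous rounds; in each round every node may perform arbitrary local computation and send distinct messages of $O(\log n)$ bits each to up to $O(\log n)$ other nodes; messages are received at the beginning of the next round. A node can receive at most $O(\log n)$ messages per round; if more are sent to it, it receives an arbitrary subset of $O(\log n)$ of them and the rest are dropped. An aggregate function $f$ maps a multiset $S$ of values to a value $f(S)$; it is distributive if there is an aggregate function $g$ such that for every multiset $S$ and every partition $S_1,\dots,S_\ell$ of $S$, $f(S)=g(f(S_1),\dots,f(S_\ell))$ (e.g. MAX, MIN, SUM). *)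

From Stdlib Require Import Sorting.Permutation.
From mathcomp Require Import all_boot.
Set Implicit Arguments. Unset Strict Implicit. Unset Printing Implicit Defensive.

(* A multiset of values of type T is represented by a list, up to permutation. *)
Definition aggregate_fun (T : Type) (f : seq T -> T) : Prop :=
  forall s1 s2 : seq T, Permutation s1 s2 -> f s1 = f s2.

Definition distributive_with (T : Type) (f g : seq T -> T) : Prop :=
  [/\ aggregate_fun f, aggregate_fun g &
      forall (S : seq T) (Ss : seq (seq T)),
        all (fun s => ~~ nilp s) Ss -> Permutation (flatten Ss) S ->
        f S = g (map f Ss)].

(* ell n : the log n unit, = floor(log2 n) + 1 (>= 1). *)
Definition ell (n : nat) : nat := (trunc_log 2 n).+1.

(* capacity kappa * log n (messages per round, bits per message) *)
Definition cap (kappa n : nat) : nat := kappa * ell n.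

(* A message: at most kappa opaque values (each an O(log n)-bit word)
   together with a bit string of at most kappa * log n bits. *)
Definition msg (T : Type) : Type := (seq T * seq bool)%type.

(* Each node starts from its identifier and its input (Some v iff it is in A).  Local computation is arbitrary. *)
Unset Implicit Arguments.
Record node_prog (T : Type) (n : nat) := NodeProg {
  st_type : Type;
  p_init : 'I_n -> option T -> st_type;
  p_send : 'I_n -> st_type -> seq ('I_n * msg T);
  p_recv : 'I_n -> st_type -> seq ('I_n * msg T) -> st_type;
  p_out  : st_type -> option T }.
Set Implicit Arguments.
Arguments st_type {T n}.
Arguments p_init {T n}.
Arguments p_send {T n}.
Arguments p_recv {T n}.
Arguments p_out {T n}.

(* An algorithm: uniform in the (opaque) value type, in f, g (the given
   distributive function and its combiner) and in n. *)
Definition algorithm : Type :=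
  forall (T : Type) (f g : seq T -> T) (n : nat), node_prog T n.

Definition valid_send (kappa : nat) (T : Type) (n : nat) (u : 'I_n)
    (l : seq ('I_n * msg T)) : Prop :=
  [/\ size l <= cap kappa n, uniq (map fst l), all (fun p => p.1 != u) l &
      all (fun p => (size p.2.1 <= kappa) && (size p.2.2 <= cap kappa n)) l].

Definition inbox (T : Type) (n : nat) (P : node_prog T n)
    (s : 'I_n -> st_type P) (v : 'I_n) : seq ('I_n * msg T) :=
  flatten [seq [seq (u, p.2) | p <- p_send P u (s u) & p.1 == v] | u <- enum 'I_n].

(* An adversary resolves receive overflow: adv r v l is what v receives in
   round r when l was sent to it. *)
Definition adversary (T : Type) (n : nat) : Type :=
  nat -> 'I_n -> seq ('I_n * msg T) -> seq ('I_n * msg T).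

Definition legal_adversary (kappa : nat) (T : Type) (n : nat) (adv : adversary T n)
  : Prop :=
  forall r v l,
    (size l <= cap kappa n -> adv r v l = l) /\
    (cap kappa n < size l ->
       exists m : bitseq, adv r v l = mask m l /\ size (adv r v l) = cap kappa n).

Fixpoint exec (T : Type) (n : nat) (P : node_prog T n) (inp : 'I_n -> option T)
    (adv : adversary T n) (r : nat) : 'I_n -> st_type P :=
  match r with
  | 0 => fun u => p_init P u (inp u)
  | r'.+1 => let s := exec P inp adv r' in
             fun v => p_recv P v (s v) (adv r' v (@inbox _ _ P s v))
  end.

Definition inputs (T : Type) (n : nat) (inp : 'I_n -> option T) : seq T :=
  pmap inp (enum 'I_n).

Arguments inbox {T n} P s v.
Arguments exec {T n} P inp adv r _.
Arguments valid_send kappa {T n} u l.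
Arguments legal_adversary kappa {T n} adv.

From mathcomp Require Import all_boot zify.

Set Implicit Arguments.
Unset Strict Implicit.
Unset Printing Implicit Defensive.

(* Number the nodes 0, ..., n-1 and read them as a binomial tree of depth
   [ell n]: at level k, a node v with 2^(k+1) | v is the parent of v + 2^k.
   In round k < ell n every node of level k sends its partial aggregate to its
   parent, which merges it into its own with g; by distributivity node v then
   holds f of the inputs of the block [v, v + 2^(k+1)).  As n < 2^(ell n),
   after ell n rounds node 0 holds f of all inputs, and the next ell n rounds
   send this value back down the tree, one level per round.  Each node sends
   and receives at most one message per round, so nothing is ever dropped. *)

Lemma modn_double_subE x u v : 0 < x ->
  (u %% (2 * x) == x) && (u - x == v) = (2 * x %| v) && (u == v + x).
Proof.
move=> x_gt0; apply/andP/andP => [[/eqP umod /eqP <-] | [/dvdnP [q ->] /eqP ->]].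
- have le_xu : x <= u by rewrite -[x in x <= _]umod leq_mod.
  split; last by rewrite subnK.
  by apply/dvdnP; exists (u %/ (2 * x)); rewrite {1}(divn_eq u (2 * x)) umod addnK.
- by rewrite modnMDl modn_small ?addnK //; lia.
Qed.

Lemma dvdn_double_or_mod x v :
  x %| v -> (2 * x %| v) || (v %% (2 * x) == x).
Proof.
case/dvdnP=> q ->; rewrite /dvdn -muln_modl modn2.
by case: (odd q); rewrite ?mul0n ?mul1n eqxx ?orbT.
Qed.

Lemma exp2_gt0 k : 0 < 2 ^ k.
Proof. by rewrite expn_gt0. Qed.

Section BinomialTree.

Variable n : nat.
Implicit Types (k : nat) (u v w : 'I_n).

Definition up_parent k u : option 'I_n :=
  if u %% 2 ^ k.+1 == 2 ^ k then insub (u - 2 ^ k) else None.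

Definition down_child k u : option 'I_n :=
  if 2 ^ k.+1 %| u then insub (u + 2 ^ k) else None.

Lemma insub_eqSome (x : nat) v : (insub x == Some v) = (x == v).
Proof.
case: insubP => [w _ <-|x_ge]; first by rewrite (inj_eq (@Some_inj _)).
by apply/esym/negbTE; apply: contra x_ge => /eqP ->.
Qed.

Lemma eq_up_parent_down_child k u v : (up_parent k u == Some v) = (down_child k v == Some u).
Proof.
rewrite /up_parent /down_child.
have := modn_double_subE u v (exp2_gt0 k); rewrite -expnS => pairing.
case: ifP => umod; case: ifP => vdvd; rewrite ?insub_eqSome //;
  move: pairing; rewrite umod vdvd /= => pairing.
- by rewrite pairing eq_sym.
- by rewrite pairing.
- by rewrite (eq_sym (_ + _)) -pairing.
Qed.

Lemma down_childE k u w : down_child k u = Some w -> w = u + 2 ^ k :> nat.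
Proof.
by rewrite /down_child; case: ifP => // _; case: insubP => // w' _ <- [<-].
Qed.

Lemma up_parentE k u w :
  up_parent k u = Some w -> 2 ^ k.+1 %| w /\ u = w + 2 ^ k :> nat.
Proof.
move/eqP; rewrite eq_up_parent_down_child /down_child; case: ifP => // wdvd.
by rewrite insub_eqSome => /eqP.
Qed.

Lemma down_child_dvd k v : 2 ^ k.+1 %| v -> down_child k v = insub (v + 2 ^ k).
Proof. by rewrite /down_child => ->. Qed.

Lemma up_parent_None k v :
  2 ^ k %| v -> up_parent k v = None -> 2 ^ k.+1 %| v.
Proof.
move=> vdvd; rewrite /up_parent; case: ifP => [_|vmod _].
- by rewrite insubT // (leq_ltn_trans (leq_subr _ _) (ltn_ord v)).
- by have := dvdn_double_or_mod vdvd; rewrite -expnS vmod orbF.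
Qed.

End BinomialTree.

Section Aggregates.

Variables (T : Type) (f g : seq T -> T).

(* [None] is the aggregate of an empty block: distributivity only covers
   partitions into non-empty blocks, so empty blocks must never reach [g]. *)
Definition aggregate (S : seq T) : option T := if S is [::] then None else Some (f S).

Definition combine (a b : option T) : option T :=
  match a, b with
  | Some x, Some y => Some (g [:: x; y])
  | None, _ => b
  | _, None => a
  end.

Lemma combine0 a : combine a None = a.
Proof. by case: a. Qed.

Lemma combine_aggregate S1 S2 : distributive_with f g ->
  combine (aggregate S1) (aggregate S2) = aggregate (S1 ++ S2).
Proof.
case=> _ _ f_distr; case: S1 => [|x S1]; case: S2 => [|y S2] //=.
  by rewrite cats0.
congr Some; symmetry; apply: (f_distr _ [:: x :: S1; y :: S2]) => //=.
by rewrite cats0.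
Qed.

Lemma odflt_aggregate S : odflt (f [::]) (aggregate S) = f S.
Proof. by case: S. Qed.

End Aggregates.

Section Blocks.

Variables (T : Type) (n : nat) (inp : 'I_n -> option T).

Definition input_at (i : nat) : option T := obind inp (insub i).

Definition block (v k : nat) : seq T := pmap input_at (iota v (2 ^ k)).

Lemma blockS v k : block v k.+1 = block v k ++ block (v + 2 ^ k) k.
Proof. by rewrite /block expnS mul2n -addnn iotaD pmap_cat. Qed.

Lemma pmap_input_at_ge v m : n <= v -> pmap input_at (iota v m) = [::].
Proof.
elim: m v => //= m IHm v n_le_v.
by rewrite /input_at insubN -?leqNgt // IHm // ltnW.
Qed.

Lemma block_ell : block 0 (ell n) = inputs inp.
Proof.
have n_le : n <= 2 ^ ell n by exact/ltnW/trunc_log_ltn.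
rewrite /block -(subnKC n_le) iotaD pmap_cat add0n.
rewrite (pmap_input_at_ge _ (leqnn n)) cats0.
by rewrite /inputs -val_enum_ord; elim: (enum 'I_n) => //= u s ->; rewrite /input_at valK.
Qed.

End Blocks.

Lemma inbox_single_sender T n (P : node_prog T n) (s : 'I_n -> st_type P)
    (v : 'I_n) (w : option 'I_n) (m : 'I_n -> msg T) :
  (forall u, [seq p <- p_send P u (s u) | p.1 == v] =
             if w == Some u then [:: (v, m u)] else [::]) ->
  inbox P s v = if w is Some u then [:: (u, m u)] else [::].
Proof.
move=> sends; rewrite /inbox (eq_map (fun u => congr1 _ (sends u))); clear sends.
case: w => [u0|]; last by elim: (enum 'I_n).
rewrite -[[:: _]]/[seq (u, m u) | u <- [:: u0]].
rewrite -(filter_pred1_uniq (enum_uniq 'I_n) (mem_enum _ u0)).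
by elim: (enum 'I_n) => //= u s' ->; rewrite (inj_eq (@Some_inj _)) eq_sym; case: eqP.
Qed.

Lemma legal_adversary_small kappa T n (adv : adversary T n) :
  0 < kappa -> legal_adversary kappa adv ->
  forall r v l, size l <= 1 -> adv r v l = l.
Proof.
move=> kappa_gt0 adv_legal r v l l_small; apply: (adv_legal r v l).1.
by apply: leq_trans l_small _; rewrite muln_gt0 kappa_gt0.
Qed.

Section AggregateAndBroadcast.

Variables (T : Type) (f g : seq T -> T) (n : nat).

Definition enc (x : option T) : msg T := (seq_of_opt x, [::]).

Definition dec (m : msg T) : option T := ohead m.1.

Lemma dec_enc x : dec (enc x) = x.
Proof. by case: x. Qed.

Definition send_to (o : option 'I_n) (m : msg T) : seq ('I_n * msg T) :=
  if o is Some w then [:: (w, m)] else [::].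

Lemma filter_send_to o m v :
  [seq p <- send_to o m | p.1 == v] = if o == Some v then [:: (v, m)] else [::].
Proof. by case: o => [w|] //=; rewrite (inj_eq (@Some_inj _)); case: eqP => [->|]. Qed.

Lemma valid_send_to kappa u o x : 0 < kappa -> o != Some u ->
  valid_send kappa u (send_to o (enc x)).
Proof.
move=> kappa_gt0; case: o => [w|] w_neq; last by [].
have cap_gt0 : 0 < cap kappa n by rewrite muln_gt0 kappa_gt0.
rewrite /valid_send /= cap_gt0 (inj_eq (@Some_inj _)) in w_neq *.
by split; rewrite ?w_neq //; case: x => [y|]; rewrite /= ?kappa_gt0.
Qed.

Definition ab_target (r : nat) (u : 'I_n) : option 'I_n :=
  if r < ell n then up_parent r u
  else if r < 2 * ell n then down_child ((2 * ell n).-1 - r) u else None.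

Definition ab_source (r : nat) (v : 'I_n) : option 'I_n :=
  if r < ell n then down_child r v
  else if r < 2 * ell n then up_parent ((2 * ell n).-1 - r) v else None.

Lemma eq_ab_target_source r u v : (ab_target r u == Some v) = (ab_source r v == Some u).
Proof.
by rewrite /ab_target /ab_source; case: ifP => _; last case: ifP => _ //;
  rewrite eq_up_parent_down_child.
Qed.

Lemma ab_target_neq r u : ab_target r u != Some u.
Proof.
rewrite /ab_target; case: ifP => _; last case: ifP => _ //.
- by apply/eqP => /up_parentE [_]; have := exp2_gt0 r; lia.
- by apply/eqP => /down_childE; have := exp2_gt0 ((2 * ell n).-1 - r); lia.
Qed.

Definition ab_send (u : 'I_n) (st : nat * option T) : seq ('I_n * msg T) :=
  send_to (ab_target st.1 u) (enc st.2).

Definition ab_recv (st : nat * option T) (l : seq ('I_n * msg T)) : nat * option T :=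
  (st.1.+1, if l is (_, m) :: _ then
              if st.1 < ell n then combine g st.2 (dec m) else dec m
            else st.2).

Definition ab_prog : node_prog T n :=
  NodeProg T n (nat * option T) (fun _ x => (0, aggregate f (seq_of_opt x)))
    ab_send (fun _ => ab_recv) (fun st => Some (odflt (f [::]) st.2)).

Lemma ab_send_valid kappa u st : 0 < kappa -> valid_send kappa u (ab_send u st).
Proof. by move=> kappa_gt0; apply: valid_send_to (ab_target_neq _ _). Qed.

Variables (inp : 'I_n -> option T) (adv : adversary T n).
Hypothesis adv_small : forall r v l, size l <= 1 -> adv r v l = l.

Local Notation state := (exec ab_prog inp adv).

Lemma state_round r u : (state r u).1 = r.
Proof. by elim: r u => //= r IHr u; rewrite IHr. Qed.

Lemma inbox_state r v :
  inbox ab_prog (state r) v =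
    if ab_source r v is Some u then [:: (u, enc (state r u).2)] else [::].
Proof.
apply: inbox_single_sender => u.
by rewrite /= /ab_send state_round filter_send_to eq_ab_target_source.
Qed.

Lemma state_recv r v : (state r.+1 v).2 =
  if ab_source r v is Some u then
    if r < ell n then combine g (state r v).2 (state r u).2 else (state r u).2
  else (state r v).2.
Proof.
rewrite /= adv_small inbox_state; last by case: ab_source.
by rewrite /ab_recv state_round; case: ab_source => //= u; rewrite dec_enc.
Qed.

Hypothesis fg_distr : distributive_with f g.

Lemma state_gather k (v : 'I_n) : k <= ell n -> 2 ^ k %| v ->
  (state k v).2 = aggregate f (block inp v k).
Proof.
elim: k v => [|k IHk] v k_lt v_dvd.
  by rewrite /block /= /input_at valK.
have v_dvdk : 2 ^ k %| v by apply: dvdn_trans v_dvd; rewrite dvdn_exp2l.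
have k_le : k <= ell n by exact: ltnW.
rewrite state_recv /ab_source k_lt down_child_dvd // blockS.
rewrite -(combine_aggregate _ _ fg_distr) -IHk //.
case: insubP => [u _ /= uE | v_ge]; last first.
  by rewrite /block pmap_input_at_ge ?combine0 // leqNgt.
by rewrite -uE !IHk // uE dvdn_add.
Qed.

Lemma state_broadcast j (v : 'I_n) : j <= ell n -> 2 ^ (ell n - j) %| v ->
  (state (ell n + j) v).2 = aggregate f (inputs inp).
Proof.
elim: j v => [|j IHj] v j_lt v_dvd.
  rewrite subn0 in v_dvd; rewrite addn0 state_gather //.
  suff -> : nat_of_ord v = 0 by rewrite block_ell.
  have n_lt := trunc_log_ltn n (ltnSn 1); have v_lt := ltn_ord v.
  case: (posnP v) => // v_gt0; have := dvdn_leq v_gt0 v_dvd; rewrite /ell; lia.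
set k := ell n - j.+1.
have round_k : (2 * ell n).-1 - (ell n + j) = k by rewrite /k; lia.
have dvd_k : 2 ^ (ell n - j) = 2 ^ k.+1 by congr (2 ^ _); rewrite /k; lia.
rewrite addnS state_recv /ab_source round_k.
have -> : (ell n + j < ell n) = false by rewrite ltnNge leq_addr.
have -> : ell n + j < 2 * ell n by lia.
have j_le : j <= ell n by exact: ltnW.
case up_v: up_parent => [u|].
- by have [u_dvd _] := up_parentE up_v; rewrite IHj // dvd_k.
- by rewrite IHj // dvd_k (up_parent_None v_dvd up_v).
Qed.

End AggregateAndBroadcast.

Definition ab_alg : algorithm := fun T f g n => ab_prog f g n.

Theorem theorem2p2 :
  forall kappa : nat, 0 < kappa ->
  exists (alg : algorithm) (C : nat),
    forall (n : nat) (T : Type) (f g : seq T -> T),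
      distributive_with f g ->
      forall (inp : 'I_n -> option T) (adv : adversary T n),
        legal_adversary kappa adv ->
        let P := alg T f g n in
        (forall r, r < C * ell n -> forall u : 'I_n,
            valid_send kappa u (p_send P u (exec P inp adv r u))) /\
        (forall v : 'I_n,
            p_out P (exec P inp adv (C * ell n) v) = Some (f (inputs inp))).
Proof.
move=> kappa kappa_gt0; exists ab_alg, 2 => n T f g fg_distr inp adv adv_legal P.
split=> [r _ u|v]; first exact: ab_send_valid.
have adv_small := legal_adversary_small kappa_gt0 adv_legal.
rewrite mul2n -addnn -(odflt_aggregate f).
by rewrite -(@state_broadcast T f g n inp adv adv_small fg_distr (ell n) v) // subnn.
Qed.
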